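(* Let $\mathbf P$ be a cyclic CFSM protocol with communication graph $G=(N,E)$. Let $\Gamma$ be a path in the global state space of $\mathbf P$ from a global state $(S,C^0)$ to a global state $(S',C^0)$. Then for every edge $\beta\in E$ there exists a path $\Gamma'$ in the global state space such that (a) $\Gamma$ and $\Gamma'$ are locally equal, and (b) every global state $(S'',(x_\xi:\xi\in E))$ on $\Gamma'$ satisfies $\sum_{\xi\in E,\ \xi\neq\beta}|x_\xi|\le 1$.
   Context: A CFSM protocol $\mathbf P$ consists of: a finite directed graph $G=(N,E)$ (the communication graph; each edge $\xi\in E$ has a tail $-\xi\in N$ and a head $+\xi\in N$); pairwise disjoint finite sets $M_\xi$ of messages, $\xi\in E$; and for each $j\in N$ a finite state machine $F_j=(K_j,\Sigma_j,T_j,h_j)$, where $K_j$ is a finite set of states, $h_j\in K_j$ is the initial state, $\Sigma_j=\{+b: b\in M_\xi,\ j=+\xi\}\cup\{-b: b\in M_\xi,\ j=-\xi\}$, and $T_j\subseteq K_j\times\Sigma_j\times K_j$ is the set of transitions, written $p\xrightarrow{e}q$ ($+b$ means ''receive $b$'', $-b$ means ''send $b$''). A composite state is a vector $S=(p_j:j\in N)$ with $p_j\in K_j$; a channel content is $C=(x_\xi:\xi\in E)$ with $x_\xi\in M_\xi^*$; a global state is a pair $(S,C)$. $C^0$ denotes the channel content with all components equal to the empty word $\lambda$; the initial global state is $(S^0,C^0)$ with $S^0=(h_j:j\in N)$. Steps: with $S=(p_j)$, $S'=(q_j)$, $C=(x_\xi)$, $C'=(y_\xi)$, we write $(S,C)\vdash^{+b}(S',C')$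 if there is $\beta\in E$ with $i=+\beta$, $b\in M_\beta$, $p_i\xrightarrow{+b}q_i$ in $F_i$, $p_j=q_j$ for $j\neq i$, $x_\beta=b\,y_\beta$ and $x_\xi=y_\xi$ for $\xi\neq\beta$; and $(S,C)\vdash^{-b}(S',C')$ if there is $\beta\in E$ with $i=-\beta$, $b\in M_\beta$, $p_i\xrightarrow{-b}q_i$ in $F_i$, $p_j=q_j$ for $j\ne i$, $y_\beta=x_\beta b$ and $y_\xi=x_\xi$ for $\xi\neq\beta$. A global state is reachable if it can be reached from $(S^0,C^0)$ by a finite sequence of steps. The global state space is the labelled directed graph whose nodes are the reachable global states and whose edges are these steps; a path is a finite sequence of consecutive steps. For a path $\Gamma=(S_0,C_0)\vdash^{e_1}\cdots\vdash^{e_k}(S_k,C_k)$ and $i\in N$, the image of $\Gamma$ in $F_i$ is the path in the transition diagram of $F_i$, starting at the $i$-th component of $S_0$, formed (in order) by the transitions of $F_i$ performed at those steps $t$ with $e_t\in\Sigma_i$ (a path of length 0 if there are none). Two paths are locally equal if their images in $F_i$ coincide for every $i\in N$. A protocol is cyclic if its communication graph is a directed cycle. *)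

From mathcomp Require Import all_boot.
Set Implicit Arguments. Unset Strict Implicit. Unset Printing Implicit Defensive.

(* Labels: Send b is "-b", Recv b is "+b". *)
Inductive act (M : Type) := Send of M | Recv of M.
Arguments Send {M}. Arguments Recv {M}.

(* The machine performing a label: -b is performed by the tail of the edge
   carrying b, +b by its head.  (e \in Sigma_j  <->  act_owner e = j.) *)
Definition act_owner (N E M : Type) (tl hd : E -> N) (chan : M -> E)
  (e : act M) : N :=
  match e with Send b => tl (chan b) | Recv b => hd (chan b) end.

(* A CFSM protocol.  Messages form one finite type [msg]; [chan b] is the
   edge xi with b \in M_xi (so the M_xi are pairwise disjoint finite sets). *)
Record protocol := Protocol {
  node : finType;
  edge : finType;
  tail : edge -> node;
  head : edge -> node;
  msg : finType;
  chan : msg -> edge;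
  state : node -> finType;
  init : forall j, state j;
  trans : forall j, state j -> act msg -> state j -> bool;
  trans_alph : forall j (p : state j) e q, trans p e q -> act_owner tail head chan e = j
}.

Section Semantics.
Variable P : protocol.

Definition owner (e : act (msg P)) : node P := act_owner (@tail P) (@head P) (@chan P) e.

Record gstate := GState {
  gS : forall j : node P, @state P j;
  gC : edge P -> seq (msg P)
}.

Definition C0 : edge P -> seq (msg P) := fun _ => [::].
Definition ginit : gstate := GState (@init P) C0.

Definition step (g : gstate) (e : act (msg P)) (g' : gstate) : Prop :=
  match e with
  | Recv b =>
      let i := head (chan b) in let be := chan b in
      trans (gS g i) (Recv b) (gS g' i) /\
      (forall j, j <> i -> gS g j = gS g' j) /\
      gC g be = b :: gC g' be /\
      (forall xi, xi <> be -> gC g xi = gC g' xi)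
  | Send b =>
      let i := tail (chan b) in let be := chan b in
      trans (gS g i) (Send b) (gS g' i) /\
      (forall j, j <> i -> gS g j = gS g' j) /\
      gC g' be = rcons (gC g be) b /\
      (forall xi, xi <> be -> gC g xi = gC g' xi)
  end.

(* A path is a start global state g0 together with the list of its steps
   (label, reached global state). *)
Fixpoint is_path (g0 : gstate) (s : seq (act (msg P) * gstate)) : Prop :=
  match s with
  | [::] => True
  | (e, g1) :: s' => step g0 e g1 /\ is_path g1 s'
  end.

Definition path_end (g0 : gstate) (s : seq (act (msg P) * gstate)) : gstate :=
  last g0 (map snd s).

Definition path_states (g0 : gstate) (s : seq (act (msg P) * gstate)) : seq gstate :=
  g0 :: map snd s.

Definition reachable (g : gstate) : Prop :=
  exists s, is_path ginit s /\ path_end ginit s = g.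

(* A path in the global state space: all its states are reachable, which
   amounts to its start being reachable. *)
Definition gs_path (g0 : gstate) (s : seq (act (msg P) * gstate)) : Prop :=
  reachable g0 /\ is_path g0 s.

Fixpoint image_trans (i : node P) (g0 : gstate) (s : seq (act (msg P) * gstate))
  : seq (@state P i * act (msg P) * @state P i) :=
  match s with
  | [::] => [::]
  | (e, g1) :: s' =>
      (if owner e == i then [:: (gS g0 i, e, gS g1 i)] else [::])
        ++ image_trans i g1 s'
  end.

Definition image (i : node P) (g0 : gstate) (s : seq (act (msg P) * gstate)) :=
  (gS g0 i, image_trans i g0 s).

Definition locally_equal g0 s g0' s' : Prop :=
  forall i : node P, image i g0 s = image i g0' s'.

Definition cyclic : Prop :=
  exists n (nd : 'I_n -> node P) (ed : 'I_n -> edge P),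
    0 < n /\ bijective nd /\ bijective ed /\
    forall k : 'I_n, tail (ed k) = nd k /\ head (ed k) = nd (ordS k).

End Semantics.

From Pilot Require Import Defs.
From Stdlib Require List.
From mathcomp Require Import all_boot.
From Stdlib Require Import FunctionalExtensionality.
Set Implicit Arguments. Unset Strict Implicit. Unset Printing Implicit Defensive.

(* An action of machine i may be moved to the front of a path as long as it is
   the first action of i on that path and is enabled at its start: the other
   machines never touch the state of i, and two actions of different machines on
   one FIFO channel are a send and a receive, which commute on a non-empty queue.
   Now take a path between states whose channels other than beta are all empty.
   Its first step is an action on beta or a send on some edge c.  Following the
   cycle from c we reach a machine whose first action is a send on beta, or a
   send on an edge whose receiver begins by receiving that very message (the
   receiver must act, or the message would still be in transit at the end).
   Moving this send, and then its receive, to the front leaves at most one message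
   off beta in transit and returns to the same situation on a shorter path. *)

Lemma iter_ordS n (k : 'I_n) m : val (iter m (@ordS n) k) = (k + m) %% n.
Proof.
elim: m => [|m IH] /=; first by rewrite addn0 modn_small.
by rewrite IH -addn1 modnDml addn1 addnS.
Qed.

Lemma ordS_reach n (k k' : 'I_n) : exists m, iter m (@ordS n) k = k'.
Proof.
exists (k' + (n - k)); apply: val_inj.
by rewrite iter_ordS addnCA subnKC ?modnDr ?modn_small // ltnW.
Qed.

Lemma dfwithC (I : eqType) (T : I -> Type) (f : forall i, T i) i j (x : T i) (y : T j) :
  i != j -> dfwith (dfwith f x) y = dfwith (dfwith f y) x.
Proof.
move=> ij; apply: functional_extensionality_dep => k.
have [<-|ik] := eqVneq i k; first by rewrite dfwith_out 1?eq_sym // !dfwith_in.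
have [<-|jk] := eqVneq j k; first by rewrite dfwith_in [RHS]dfwith_out // dfwith_in.
by rewrite !dfwith_out.
Qed.

Section Firing.
Variable P : protocol.
Local Notation gst := (gstate P).
Local Notation label := (act (msg P)).
Local Notation hd := (@Defs.head P).
Implicit Types (g h : gst) (x : node P) (c : edge P) (e : label) (s t : seq (label * gst)).

Definition act_chan (e : label) : edge P := match e with Send b | Recv b => chan b end.

Definition enabled (e : label) (g : gst) : bool :=
  if e is Recv b then ohead (gC g (chan b)) == Some b else true.

Definition chan_effect (e : label) (X : seq (msg P)) : seq (msg P) :=
  if e is Send b then rcons X b else behead X.

Definition fire (e : label) (q : state (owner e)) (g : gst) : gst :=
  GState (dfwith (gS g) q)
    (fun c => if c == act_chan e then chan_effect e (gC g c) else gC g c).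
Arguments fire : clear implicits.

Lemma stepP g e h : step g e h <->
  exists2 q : state (owner e), trans (gS g (owner e)) e q & enabled e g /\ h = fire e q g.
Proof.
split=> [|[q tr [en ->]]]; last first.
  case: e q tr en => b q tr en; split; rewrite /= ?dfwith_in ?eqxx //;
    (split; [by move=> j ne; rewrite dfwith_out // eq_sym; apply/eqP
            |split=> [|xi /eqP /negbTE -> //]]) => //.
  by move: en => /=; case: (gC g (chan b)) => [|b' w] //= /eqP [->].
case: h => Sh Ch; case: e => b /= [tr [os [ch oc]]]; exists (Sh _) => //;
  split; rewrite /= ?ch ?eqxx //; (congr GState;
  [apply: functional_extensionality_dep => j | apply: functional_extensionality => c]).
all: first [by case: dfwithP => // k /eqP ne; rewrite os // => E; apply: ne
           |by case: eqP => [->|/oc]; rewrite ?ch].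
Qed.

Lemma gS_fire_in e q g : gS (fire e q g) (owner e) = q.
Proof. exact: dfwith_in. Qed.

Lemma gS_fire_out e q g x : owner e != x -> gS (fire e q g) x = gS g x.
Proof. exact: dfwith_out. Qed.

Lemma fireC e q e' q' g : owner e != owner e' -> enabled e g -> enabled e' g ->
  fire e q (fire e' q' g) = fire e' q' (fire e q g).
Proof.
move=> ne en en'; congr GState; first by apply: dfwithC; rewrite eq_sym.
apply: functional_extensionality => c /=; case: eqP => [Ec|_]; case: eqP => [Ec'|_] //.
move: Ec' ne en en'; rewrite {}Ec; case: e q => b q; case: e' q' => b' q' /= E;
  rewrite /owner /= E ?eqxx // => _.
  by case: (gC g (chan b')).
by case: (gC g (chan b')).
Qed.

Lemma enabled_fire e g e' q' : owner e' != owner e -> enabled e g -> enabled e (fire e' q' g).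
Proof.
case: e => //= b ne en; case: ifP => [/eqP E|//]; case: e' q' ne E => b' q' ne /= E.
  by case: (gC g (chan b)) en.
by rewrite /owner /= -E eqxx in ne.
Qed.

Lemma step_fire g e' h e q : owner e' != owner e -> enabled e g ->
  step g e' h -> step (fire e q g) e' (fire e q h).
Proof.
move=> ne en /stepP [q' tr [en' ->]]; apply/stepP; exists q'.
  by rewrite gS_fire_out // eq_sym.
by split; [apply: enabled_fire => //; rewrite eq_sym | rewrite fireC // eq_sym].
Qed.

Lemma enabled_step e g e' h : owner e' != owner e -> enabled e g -> step g e' h -> enabled e h.
Proof. by move=> ne en /stepP [q' _ [_ ->]]; apply: enabled_fire. Qed.

Lemma step_gS_out g e h x : owner e != x -> step g e h -> gS h x = gS g x.
Proof. by move=> ne /stepP [q _ [_ ->]]; apply: gS_fire_out. Qed.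

Lemma step_gC g e h c :
  step g e h -> gC h c = if c == act_chan e then chan_effect e (gC g c) else gC g c.
Proof. by case/stepP=> q _ [_ ->]. Qed.

Lemma step_receiver_prefix g e h c : owner e != hd c -> step g e h ->
  exists w, gC h c = gC g c ++ w.
Proof.
move=> ne /step_gC ->; case: eqP => [Ec|_]; last by exists [::]; rewrite cats0.
move: ne; rewrite {}Ec; case: e => b; rewrite /owner /= ?eqxx // => _.
by exists [:: b]; rewrite cats1.
Qed.

Lemma step_enabled g e h : step g e h -> enabled e g.
Proof. by case/stepP=> q _ []. Qed.

Definition acts x s : seq label :=
  [seq p.1 | p <- s & owner p.1 == x].

Definition idle x s : Prop := acts x s = [::].

Definition same_images g s t : Prop := forall x, image_trans x g s = image_trans x g t.

Definition fire_path e q s : seq (label * gst) := [seq (p.1, fire e q p.2) | p <- s].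
Arguments fire_path : clear implicits.

Lemma acts_cons x e h s :
  acts x ((e, h) :: s) = if owner e == x then e :: acts x s else acts x s.
Proof. by rewrite /acts /=; case: ifP. Qed.

Lemma acts_cat x s1 s2 : acts x (s1 ++ s2) = acts x s1 ++ acts x s2.
Proof. by rewrite /acts filter_cat map_cat. Qed.

Lemma idle_cons x e h s : idle x ((e, h) :: s) <-> owner e != x /\ idle x s.
Proof. by rewrite /idle acts_cons; case: eqP => _; split=> [|[]]. Qed.

Lemma idle_cat x s1 s2 : idle x (s1 ++ s2) <-> idle x s1 /\ idle x s2.
Proof. by rewrite /idle acts_cat; case: (acts x s1) => [|a l] /=; split=> [|[]]. Qed.

Lemma acts_image x g s : acts x s = [seq p.1.2 | p <- image_trans x g s].
Proof. by elim: s g => [|[e h] s IH] g //=; rewrite acts_cons map_cat (IH h); case: eqP. Qed.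

Lemma same_images_acts g s t x : same_images g s t -> acts x s = acts x t.
Proof. by move=> sim; rewrite !(acts_image x g) sim. Qed.

Lemma image_trans_idle x g s : idle x s -> image_trans x g s = [::].
Proof. by rewrite /idle (acts_image x g); case: image_trans. Qed.

Lemma path_end_cons g e h s : path_end g ((e, h) :: s) = path_end h s.
Proof. by []. Qed.

Lemma path_end_cat g s1 s2 : path_end g (s1 ++ s2) = path_end (path_end g s1) s2.
Proof. by rewrite /path_end map_cat last_cat. Qed.

Lemma is_path_cat g s1 s2 :
  is_path g (s1 ++ s2) <-> is_path g s1 /\ is_path (path_end g s1) s2.
Proof.
elim: s1 g => [|[e h] s1 IH] g /=; first by split => // [[]].
by rewrite IH; split => [[? []]|[[? ?] ?]].
Qed.

Lemma image_trans_cat x g s1 s2 :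
  image_trans x g (s1 ++ s2) = image_trans x g s1 ++ image_trans x (path_end g s1) s2.
Proof. by elim: s1 g => [|[e h] s1 IH] g //=; rewrite IH catA. Qed.

Lemma idle_gS x g s : is_path g s -> idle x s -> gS (path_end g s) x = gS g x.
Proof.
elim: s g => [|[e h] s IH] g //= [st ps] /idle_cons [ne id].
by rewrite (IH h) // (step_gS_out ne st).
Qed.

Lemma idle_receiver_prefix c g s : is_path g s -> idle (hd c) s ->
  exists w, gC (path_end g s) c = gC g c ++ w.
Proof.
elim: s g => [|[e h] s IH] g /=; first by exists [::]; rewrite cats0.
move=> [st ps] /idle_cons [ne id].
have [w1 E1] := step_receiver_prefix ne st; have [w2 E2] := IH h ps id.
by exists (w1 ++ w2); rewrite path_end_cons E2 E1 catA.
Qed.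

Lemma fire_path_is_path e q g s : idle (owner e) s -> enabled e g -> is_path g s ->
  is_path (fire e q g) (fire_path e q s).
Proof.
elim: s g => [|[e' h] s IH] g //= /idle_cons [ne id] en [st ps].
by split; [exact: step_fire | apply: IH => //; exact: enabled_step st].
Qed.

Lemma path_end_fire_path e q g s :
  path_end (fire e q g) (fire_path e q s) = fire e q (path_end g s).
Proof. by elim: s g => // [[e' h] s IH] g; exact: IH. Qed.

Lemma image_trans_fire_path e q g s x : idle (owner e) s ->
  image_trans x (fire e q g) (fire_path e q s) = image_trans x g s.
Proof.
elim: s g => [|[e' h] s IH] g //= /idle_cons [ne id]; rewrite IH //.
by case: eqP => // <-; rewrite !dfwith_out // eq_sym.
Qed.

Lemma acts_first x s e : ohead (acts x s) = Some e ->
  exists s1 h s2, [/\ s = s1 ++ (e, h) :: s2, idle x s1 & owner e = x].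
Proof.
elim: s => [|[e1 h1] s IH] //; rewrite acts_cons.
case: eqP => [<- [<-]|ne /IH [s1 [h [s2 [-> id ow]]]]]; first by exists [::], h1, s.
by exists ((e1, h1) :: s1), h, s2; split => //; apply/idle_cons; split => //; apply/eqP.
Qed.

Lemma acts_owner x s e : ohead (acts x s) = Some e -> owner e = x.
Proof. by case/acts_first=> ? [? [? []]]. Qed.

Lemma move_to_front g s1 e h s2 :
  is_path g (s1 ++ (e, h) :: s2) -> idle (owner e) s1 -> enabled e g ->
  let q := gS h (owner e) in let t := fire_path e q s1 ++ s2 in
  [/\ step g e (fire e q g), is_path (fire e q g) t,
      path_end (fire e q g) t = path_end g (s1 ++ (e, h) :: s2)
    & same_images g (s1 ++ (e, h) :: s2) ((e, fire e q g) :: t)].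
Proof.
move=> /is_path_cat [p1 [st p2]] id en q t.
have Eq : gS (path_end g s1) (owner e) = gS g (owner e) := idle_gS p1 id.
have /stepP [q' tr [_ Eh]] := st.
have Eq' : q' = q by rewrite /q Eh gS_fire_in.
have end1 : path_end (fire e q g) (fire_path e q s1) = h.
  by rewrite path_end_fire_path Eh Eq'.
split.
- by apply/stepP; exists q; rewrite -?Eq -?Eq'.
- by apply/is_path_cat; rewrite end1; split => //; exact: fire_path_is_path.
- by rewrite !path_end_cat end1.
move=> x; rewrite /= !image_trans_cat end1 image_trans_fire_path //=.
by case: eqP => // <-; rewrite image_trans_idle // Eq dfwith_in.
Qed.

Lemma move_first_act g s x e : is_path g s -> ohead (acts x s) = Some e -> enabled e g ->
  exists g1 t, [/\ step g e g1, is_path g1 t, path_end g1 t = path_end g s,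
                   size t < size s & same_images g s ((e, g1) :: t)].
Proof.
move=> ps /acts_first [s1 [h [s2 [Es id ow]]]] en; subst s x.
have [st pt pe sim] := move_to_front ps id en.
by eexists _, _; split; last exact: sim; rewrite // !size_cat size_map /= addnS.
Qed.

Lemma first_act_enabled g s x e : is_path g s -> ohead (acts x s) = Some e ->
  gC g (act_chan e) != [::] -> enabled e g.
Proof.
move=> ps /acts_first [s1 [h [s2 [Es id ow]]]]; subst s x.
case: e ps id => //= b /is_path_cat [p1 [/step_enabled en _]] id ne.
have [w Hw] := idle_receiver_prefix p1 id; move: en; rewrite /= Hw.
by case: (gC g (chan b)) ne.
Qed.

Lemma pending_send g s x b : is_path g s -> ohead (acts x s) = Some (Send b) ->
  idle (hd (chan b)) s -> gC (path_end g s) (chan b) != [::].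
Proof.
move=> ps /acts_first [s1 [h [s2 [Es _ _]]]]; subst s.
move: ps => /is_path_cat [_ [st ps2]] /idle_cat [_ /idle_cons [_ id2]].
rewrite path_end_cat path_end_cons; have [w ->] := idle_receiver_prefix ps2 id2.
by rewrite (step_gC _ st) eqxx /=; case: (gC _ _).
Qed.

End Firing.

Section CyclicReordering.
Variable P : protocol.
Local Notation gst := (gstate P).
Local Notation label := (act (msg P)).
Local Notation hd := (@Defs.head P).
Implicit Types (g h : gst) (x : node P) (c : edge P) (e : label) (s t : seq (label * gst)).

Variable beta : edge P.
Variable succ : edge P -> edge P.
Hypothesis tail_succ : forall c, tail (succ c) = hd c.
Hypothesis tail_inj : injective (@tail P).
Hypothesis head_inj : injective hd.
Hypothesis succ_reach : forall c, exists m, iter m succ c = beta.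

Definition load g := \sum_(xi | xi != beta) size (gC g xi).

Lemma load0_chan g c : load g = 0 -> c != beta -> gC g c = [::].
Proof. by move/eqP; rewrite sum_nat_eq0 => /forall_inP H nc; apply/nilP/H. Qed.

Lemma load_step g e h : step g e h -> load h =
  if act_chan e == beta then load g else if e is Send _ then (load g).+1 else (load g).-1.
Proof.
move=> st; have en := step_enabled st; rewrite /load.
under eq_bigr => xi _ do rewrite (step_gC xi st).
case: eqP => [Eb|/eqP nb].
  by apply: eq_bigr => xi nx; rewrite Eb (negbTE nx).
rewrite (bigD1 (act_chan e)) //= eqxx [in RHS](bigD1 (act_chan e)) //=.
rewrite (eq_bigr (fun xi => size (gC g xi))); last by move=> xi /andP[_ /negbTE ->].
case: e en {st nb} => b /=; first by rewrite size_rcons.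
by case: (gC g (chan b)).
Qed.

Lemma load_empty S : load (GState S (@C0 P)) = 0.
Proof. exact: big1. Qed.

Definition light_reorderable g s := exists t,
  [/\ is_path g t, same_images g s t & forall h, List.In h (path_states g t) -> load h <= 1].

Lemma light_reorderable_nil g : load g <= 1 -> light_reorderable g [::].
Proof. by exists [::]; split => // h [<-|]. Qed.

Lemma light_reorderable_cons g e h s :
  step g e h -> load g <= 1 -> light_reorderable h s -> light_reorderable g ((e, h) :: s).
Proof.
move=> st lg [t [pt sim lt]]; exists ((e, h) :: t); split => //=.
  by move=> x /=; rewrite sim.
by move=> h' [<-|/lt].
Qed.

Lemma light_reorderable_same g s t :
  same_images g s t -> light_reorderable g t -> light_reorderable g s.
Proof. by move=> sim [t' [pt sim' lt]]; exists t'; split => // x; rewrite sim sim'. Qed.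

Lemma sender_chain g s c b : is_path g s -> load (path_end g s) = 0 ->
  ohead (acts (tail c) s) = Some (Send b) ->
  exists c' b', ohead (acts (tail c') s) = Some (Send b') /\
    (c' = beta \/ exists b'', ohead (acts (hd c') s) = Some (Recv b'')).
Proof.
move=> ps end0; have [m] := succ_reach c; elim: m c b => [|m IH] c b Hm Hs.
  by exists c, b; split => //; left.
have [cb|nb] := eqVneq c beta; first by exists c, b; split => //; left.
case Eh: (acts (hd c) s) => [|[b'|b'] ?].
- have Ec : chan b = c by apply: tail_inj; exact: (acts_owner Hs).
  by have := pending_send ps Hs; rewrite Ec (load0_chan end0 nb) => /(_ Eh).
- by apply: (IH (succ c) b'); [rewrite -iterSr | rewrite tail_succ Eh].
by exists c, b; split => //; right; exists b'; rewrite Eh.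
Qed.

Lemma light_reorderable_from_sender g s c b :
  (forall g' t, size t < size s -> is_path g' t -> load g' = 0 ->
     load (path_end g' t) = 0 -> light_reorderable g' t) ->
  is_path g s -> load g = 0 -> load (path_end g s) = 0 ->
  ohead (acts (tail c) s) = Some (Send b) ->
  (c = beta \/ exists b', ohead (acts (hd c) s) = Some (Recv b')) -> light_reorderable g s.
Proof.
move=> IH ps g0 end0 Hs Hc.
have Ec : chan b = c by apply: tail_inj; exact: (acts_owner Hs).
have [g1 [t [st1 pt pe sz sim]]] := move_first_act ps Hs (erefl : enabled (Send b) g).
have l1 := load_step st1; rewrite /= Ec g0 in l1.
apply: (light_reorderable_same sim); apply: (light_reorderable_cons st1); first by rewrite g0.
have [Eb|nb] := eqVneq c beta.
  by apply: IH; rewrite // ?pe // l1 Eb eqxx.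
rewrite (negbTE nb) in l1; case: Hc => [/eqP|[b' Hr]]; first by rewrite (negbTE nb).
have hc : hd c != tail c by apply/eqP => E; move: Hr; rewrite E Hs.
have Hr1 : ohead (acts (hd c) t) = Some (Recv b').
  by rewrite -Hr (same_images_acts _ sim) acts_cons /owner /= Ec eq_sym (negbTE hc).
have Eb' : chan b' = c by apply: head_inj; exact: (acts_owner Hr).
have en : enabled (Recv b') g1.
  apply: (first_act_enabled pt Hr1).
  by rewrite /= Eb' (step_gC _ st1) /= Ec eqxx; case: (gC g c).
have [g2 [t2 [st2 pt2 pe2 sz2 sim2]]] := move_first_act pt Hr1 en.
have l2 := load_step st2; rewrite /= Eb' (negbTE nb) l1 in l2.
apply: (light_reorderable_same sim2); apply: (light_reorderable_cons st2); first by rewrite l1.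
by apply: IH => //; [exact: ltn_trans sz | rewrite pe2 pe].
Qed.

Lemma load0_path_light_reorderable g s :
  is_path g s -> load g = 0 -> load (path_end g s) = 0 -> light_reorderable g s.
Proof.
move: {2}(size s).+1 (ltnSn (size s)) => K; elim: K g s => // K IH g [|[e h] s] Hs ps g0 end0.
  by apply: light_reorderable_nil; rewrite g0.
have [Eb|nb] := eqVneq (act_chan e) beta.
  case: ps => st ps; apply: (light_reorderable_cons st); first by rewrite g0.
  by apply: IH => //; rewrite (load_step st) Eb eqxx.
case: e nb ps end0 Hs => b nb ps end0 Hs; last first.
  by case: ps => /step_enabled; rewrite /= (load0_chan g0 nb).
have Hs0 : ohead (acts (tail (chan b)) ((Send b, h) :: s)) = Some (Send b).
  by rewrite acts_cons /owner /= eqxx.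
have [c [b' [Hs' Hc]]] := sender_chain ps end0 Hs0.
apply: (light_reorderable_from_sender _ ps g0 end0 Hs' Hc) => g' t lt; apply: IH.
exact: leq_trans lt Hs.
Qed.

End CyclicReordering.

Lemma cyclic_line_graph (P : protocol) : cyclic P ->
  exists succ : edge P -> edge P,
    [/\ forall c, tail (succ c) = Defs.head c, injective (@tail P), injective (@Defs.head P)
      & forall c c', exists m, iter m succ c = c'].
Proof.
case=> n [nd [ed [_ [nd_bij [[edinv edK edinvK] hk]]]]].
have nd_inj := bij_inj nd_bij.
have tail_ed k : tail (ed k) = nd k by case: (hk k).
have head_ed k : Defs.head (ed k) = nd (ordS k) by case: (hk k).
exists (fun c => ed (ordS (edinv c))); split.
- by move=> c; rewrite tail_ed -head_ed edinvK.
- by move=> c c'; rewrite -(edinvK c) -(edinvK c') !tail_ed => /nd_inj ->.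
- by move=> c c'; rewrite -(edinvK c) -(edinvK c') !head_ed => /nd_inj /ordS_inj ->.
move=> c c'; have [m Hm] := ordS_reach (edinv c) (edinv c'); exists m.
have iter_ed k : iter m (fun c => ed (ordS (edinv c))) (ed k) = ed (iter m (@ordS n) k).
  by elim: m {Hm} => //= m ->; rewrite edK.
by rewrite -(edinvK c) iter_ed Hm edinvK.
Qed.

Theorem theorem5p2 (P : protocol) (hcyc : cyclic P)
  (S S' : forall j : node P, @state P j)
  (s : seq (act (msg P) * gstate P)) :
  gs_path (GState S (@C0 P)) s ->
  path_end (GState S (@C0 P)) s = GState S' (@C0 P) ->
  forall beta : edge P,
  exists (g0' : gstate P) (s' : seq (act (msg P) * gstate P)),
    gs_path g0' s' /\
    locally_equal (GState S (@C0 P)) s g0' s' /\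
    forall g, List.In g (path_states g0' s') ->
      \sum_(xi : edge P | xi != beta) size (gC g xi) <= 1.
Proof.
move=> [reach ps] pe beta.
have [succ [tail_succ tail_inj head_inj reach_all]] := cyclic_line_graph hcyc.
have end0 : load beta (path_end (GState S (@C0 P)) s) = 0 by rewrite pe load_empty.
have [t [pt sim light]] :=
  load0_path_light_reorderable tail_succ tail_inj head_inj (reach_all^~ beta) ps
    (load_empty _ _) end0.
exists (GState S (@C0 P)), t; split => //; split => // i.
by rewrite /Defs.image sim.
Qed.
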